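(* Let $G$ be a connected simple graph with at least $3$ vertices and let $v\in V(G)$ be a vertex that is not a cut vertex of $G$. Then $$\chi_{dom}(G)-1\leq \chi_{dom}(G-v)\leq \chi_{dom}(G)+\deg v-1.$$
   Context: All graphs are finite and simple. A dominated coloring (dom-coloring) of a graph $H$ is a proper vertex coloring of $H$ such that for every color class $C$ there is a vertex $x\in V(H)$ adjacent to every vertex of $C$ (i.e. $C\subseteq N_H(x)$). The dominated chromatic number $\chi_{dom}(H)$ is the minimum number of colors in a dominated coloring of $H$. $G-v$ denotes the graph obtained from $G$ by deleting $v$ and all edges incident with $v$; $\deg v$ is the degree of $v$ in $G$. *)

From mathcomp Require Import all_boot.
Set Implicit Arguments. Unset Strict Implicit. Unset Printing Implicit Defensive.

(* Induced subgraphs are handled by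
   carrying an explicit vertex set S : {set T}; the graph "G[S]" has vertex
   set S and edges e restricted to S.  G itself is G[setT], and G - v is
   G[setT :\ v]. *)

Definition simple_graph (T : finType) (e : rel T) : Prop :=
  symmetric e /\ irreflexive e.

Definition induced_rel (T : finType) (e : rel T) (S : {set T}) : rel T :=
  fun x y => [&& x \in S, y \in S & e x y].

Definition connected_on (T : finType) (e : rel T) (S : {set T}) : Prop :=
  forall x y, x \in S -> y \in S -> connect (induced_rel e S) x y.

Definition cut_vertex (T : finType) (e : rel T) (S : {set T}) (v : T) : Prop :=
  v \in S /\ ~ connected_on e (S :\ v).

Definition deg (T : finType) (e : rel T) (S : {set T}) (v : T) : nat :=
  #|[set u in S | e v u]|.

Definition dom_coloringb (T : finType) (e : rel T) (S : {set T}) (k : nat)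
    (c : {ffun T -> 'I_k}) : bool :=
  [forall x in S, forall y in S, e x y ==> (c x != c y)] &&
  [forall i : 'I_k, exists x in S,
      forall y in S, (c y == i) ==> e x y].

Definition dom_colorable (T : finType) (e : rel T) (S : {set T}) (k : nat) : bool :=
  [exists c : {ffun T -> 'I_k}, dom_coloringb e S c].

(* dominated chromatic number: the least k such that G[S] has a dominated
   coloring with k colors (searched among 0..#|T|; every graph without
   isolated vertices has one with at most #|S| <= #|T| colors). *)
Definition chi_dom (T : finType) (e : rel T) (S : {set T}) : nat :=
  find (dom_colorable e S) (iota 0 #|T|.+1).

From mathcomp Require Import all_boot.
From mathcomp Require Import zify.

Set Implicit Arguments.
Unset Strict Implicit.
Unset Printing Implicit Defensive.

(* Lower bound: a dominated coloring of G - v extends to G by giving v a new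
   color, whose class {v} is dominated by any neighbour of v.
   Upper bound: in a dominated coloring of G, recolor all neighbours of v but
   one (w) with pairwise distinct new colors and delete v.  The new classes are
   singletons, dominated because G - v is connected; an old class that was
   dominated by v now lies in {w}, dominated by a neighbour of w in G - v. *)

Section DominatedColoring.
Variables (T : finType) (e : rel T).
Hypotheses (e_sym : symmetric e) (e_irr : irreflexive e).

Definition nat_dom_coloring (S : {set T}) (k : nat) (f : T -> nat) : Prop :=
  [/\ {in S, forall y, f y < k},
      {in S &, forall x y, e x y -> f x != f y} &
      forall i, i < k ->
        exists2 x, x \in S & {in S, forall y, f y = i -> e x y}].

Definition no_isolated_vertex (S : {set T}) : Prop :=
  {in S, forall y, exists2 x, x \in S & e x y}.

Lemma dom_colorable_nat_coloring (S : {set T}) (k : nat) :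
  dom_colorable e S k -> exists f, nat_dom_coloring S k f.
Proof.
case/existsP=> c /andP[/forall_inP c_proper /forallP c_dom].
exists (fun y => val (c y)); split=> [y _ | x y xS yS exy | i lt_ik].
- exact: ltn_ord.
- by have /forall_inP/(_ y yS)/implyP/(_ exy) := c_proper x xS.
- have /exists_inP[x xS /forall_inP x_dom] := c_dom (Ordinal lt_ik).
  exists x => // y yS cy; apply: (implyP (x_dom y yS)).
  by apply/eqP/val_inj.
Qed.

Lemma nat_coloring_dom_colorable (S : {set T}) (k : nat) (f : T -> nat) :
  0 < k -> nat_dom_coloring S k f -> dom_colorable e S k.
Proof.
case: k => // k _ [f_lt f_proper f_dom]; apply/existsP.
exists [ffun y => inord (f y)]; apply/andP; split.
- apply/forall_inP=> x xS; apply/forall_inP=> y yS; apply/implyP=> exy.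
  by rewrite !ffunE; apply: contra (f_proper x y xS yS exy) => /eqP/(congr1 val);
    rewrite /= !inordK ?f_lt // => ->.
- apply/forallP=> i; have [x xS x_dom] := f_dom i (ltn_ord i).
  apply/exists_inP; exists x => //; apply/forall_inP=> y yS.
  apply/implyP; rewrite ffunE => /eqP/(congr1 val); rewrite /= inordK ?f_lt //.
  exact: x_dom.
Qed.

Lemma chi_dom_le (S : {set T}) (k : nat) : dom_colorable e S k -> chi_dom e S <= k.
Proof.
move=> colk; rewrite /chi_dom; have [le_kT | lt_Tk] := leqP k #|T|.
  case: leqP => // lt_k_find.
  by have := before_find 0 lt_k_find; rewrite nth_iota ?add0n ?colk.
(* when the search fails, [find] returns the length [#|T|.+1] of the range *)
by apply: leq_trans (find_size _ _) _; rewrite size_iota.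
Qed.

Lemma chi_dom_colorable (S : {set T}) (k : nat) :
  k <= #|T| -> dom_colorable e S k -> dom_colorable e S (chi_dom e S).
Proof.
move=> le_kT colk; have has_col : has (dom_colorable e S) (iota 0 #|T|.+1).
  by apply/hasP; exists k; rewrite ?mem_iota.
have := nth_find 0 has_col; rewrite nth_iota ?add0n //.
by rewrite -[X in _ < X](size_iota 0 #|T|.+1) -has_find.
Qed.

Lemma connected_no_isolated_vertex (S : {set T}) :
  connected_on e S -> 1 < #|S| -> no_isolated_vertex S.
Proof.
move=> S_conn S_gt1 y yS.
have /card_gt0P[z] : 0 < #|S :\ y| by move: S_gt1; rewrite (cardsD1 y S) yS.
rewrite in_setD1 => /andP[zy zS].
case/connectP: (S_conn y z yS zS) => [[|x p]] /=; first by move=> _ zy'; rewrite zy' eqxx in zy.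
by case/andP=> /and3P[_ xS eyx] _ _; exists x; rewrite // e_sym.
Qed.

Lemma injective_nat_dom_coloring (S : {set T}) (k : nat) (f : T -> nat) :
  {in S, forall y, f y < k} -> {in S &, injective f} -> S != set0 ->
  no_isolated_vertex S -> nat_dom_coloring S k f.
Proof.
move=> f_lt f_inj /set0Pn[s sS] S_nbr; split=> // [x y xS yS exy | i _].
  by apply: contraTneq exy => /(f_inj x y xS yS) ->; rewrite e_irr.
have [/exists_inP[y yS /eqP fy] | no_y] := boolP [exists y in S, f y == i].
  have [x xS exy] := S_nbr y yS.
  by exists x => // y' y'S fy'; have -> : y' = y by apply: f_inj; rewrite ?fy.
exists s => // y yS fy; case/negP: no_y; apply/exists_inP; by exists y; rewrite ?fy.
Qed.

Lemma nat_dom_coloring_add_vertex (S : {set T}) (k : nat) (f : T -> nat) (v w : T) :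
  w \in S -> e w v -> nat_dom_coloring (S :\ v) k f ->
  nat_dom_coloring S k.+1 (fun y => if y == v then k else f y).
Proof.
move=> wS ewv [f_lt f_proper f_dom].
have Sv y : y \in S -> y != v -> y \in S :\ v by rewrite in_setD1 => -> ->.
split=> [y yS | x y xS yS exy | i].
- by case: eqVneq => [_ // | yv]; exact: ltnW (f_lt _ (Sv _ yS yv)).
- case: (eqVneq x v) (eqVneq y v) => [xv | xv] [yv | yv].
  + by rewrite xv yv e_irr in exy.
  + by rewrite neq_ltn f_lt ?Sv ?orbT.
  + by rewrite neq_ltn f_lt ?Sv.
  + exact: f_proper (Sv _ xS xv) (Sv _ yS yv) exy.
rewrite ltnS leq_eqVlt => /orP[/eqP -> | lt_ik].
  exists w => // y yS; case: eqVneq => [-> // | yv fy].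
  by have := f_lt y (Sv _ yS yv); rewrite fy ltnn.
have [x /setD1P[_ xS] x_dom] := f_dom i lt_ik; exists x => // y yS.
case: eqVneq => [_ ik | yv]; first by rewrite ik ltnn in lt_ik.
exact: x_dom (Sv _ yS yv).
Qed.

Definition recolor (A : {set T}) (k : nat) (f : T -> nat) (y : T) : nat :=
  if y \in A then k + index y (enum A) else f y.

Section Recolor.
Variables (S A : {set T}) (k : nat) (f : T -> nat).
Hypothesis f_lt : {in S, forall y, f y < k}.

Lemma recolor_notin y : y \notin A -> recolor A k f y = f y.
Proof. by rewrite /recolor => /negbTE ->. Qed.

Lemma recolor_lt : {in S, forall y, recolor A k f y < k + #|A|}.
Proof.
move=> y yS; rewrite /recolor; case: ifP => [yA | _].
  by rewrite ltn_add2l cardE index_mem mem_enum.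
by apply: ltn_addr; apply: f_lt.
Qed.

Lemma recolor_old y i : i < k -> recolor A k f y = i -> y \notin A /\ f y = i.
Proof.
move=> lt_ik; rewrite /recolor; case: ifP => // _ ki.
by move: lt_ik; rewrite -ki ltnNge leq_addr.
Qed.

Lemma recolor_new y y0 i : y \in A -> recolor A k f y = i -> y = nth y0 (enum A) (i - k).
Proof. by move=> yA; rewrite /recolor yA => <-; rewrite addKn nth_index ?mem_enum. Qed.

Lemma recolor_proper :
  {in S &, forall x y, e x y -> f x != f y} ->
  {in S &, forall x y, e x y -> recolor A k f x != recolor A k f y}.
Proof.
move=> f_proper x y xS yS exy; rewrite /recolor.
case: ifP (ifP) => [xA | xA] [yA | yA]; rewrite ?xA ?yA.
- rewrite eqn_add2l; apply: contraTneq exy => idx_xy.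
  rewrite -(nth_index x (_ : x \in enum A)) ?mem_enum // idx_xy.
  by rewrite nth_index ?mem_enum // e_irr.
- by rewrite neq_ltn ltn_addr ?f_lt ?orbT.
- by rewrite neq_ltn ltn_addr ?f_lt.
- exact: f_proper.
Qed.

End Recolor.

Lemma nat_dom_coloring_delete_vertex (S : {set T}) (k : nat) (f : T -> nat) (v w : T) :
  let A := [set u in S | e v u] :\ w in
  w \in S -> e v w -> no_isolated_vertex (S :\ v) ->
  nat_dom_coloring S k f -> nat_dom_coloring (S :\ v) (k + #|A|) (recolor A k f).
Proof.
move=> A wS evw Sv_nbr [f_lt f_proper f_dom].
have Sv_sub : {subset S :\ v <= S} by move=> y /setD1P[].
have wSv : w \in S :\ v by rewrite in_setD1 wS andbT; apply: contraTneq evw => ->; rewrite e_irr.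
split=> [y /Sv_sub yS | x y /Sv_sub xS /Sv_sub yS | i lt_i].
- exact: (recolor_lt A f_lt yS).
- exact: (recolor_proper A f_lt f_proper xS yS).
have [ki | lt_ik] := leqP k i.
  set u := nth w (enum A) (i - k).
  have uA : u \in A by rewrite -mem_enum mem_nth // -cardE; lia.
  have uSv : u \in S :\ v.
    move: uA; rewrite !inE => /and3P[_ uS evu].
    by rewrite uS andbT; apply: contraTneq evu => ->; rewrite e_irr.
  have [x xSv exu] := Sv_nbr u uSv; exists x => // y ySv ry.
  have yA : y \in A.
    apply: contraLR ki; rewrite -ltnNge -ry => /recolor_notin ->.
    exact: f_lt (Sv_sub _ ySv).
  by rewrite (recolor_new w yA ry).
have [x xS x_dom] := f_dom i lt_ik.
have old_class y : y \in S :\ v -> recolor A k f y = i -> y \notin A /\ e x y.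
  move=> /Sv_sub yS /(recolor_old lt_ik)[yA fy]; split=> //; exact: x_dom.
case: (eqVneq x v) => [xv | xv]; last first.
  by exists x; [rewrite in_setD1 xv | move=> y /old_class H /H[]].
have [z zSv ezw] := Sv_nbr w wSv; exists z => // y ySv /(old_class _ ySv)[yA exy].
suff -> : y = w by [].
apply: contraTeq yA => yw; rewrite negbK /A !inE yw -xv exy andbT; by case/setD1P: ySv.
Qed.

Lemma dom_colorable_card (S : {set T}) :
  S != set0 -> no_isolated_vertex S -> dom_colorable e S #|T|.
Proof.
move=> S_ne S_nbr; have /set0Pn[s _] := S_ne.
apply: (@nat_coloring_dom_colorable _ _ (fun y => enum_rank y)).
  by apply/card_gt0P; exists s.
by apply: injective_nat_dom_coloring => // x y _ _ /val_inj/enum_rank_inj.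
Qed.

Lemma chi_dom_nat_coloring (S : {set T}) :
  S != set0 -> no_isolated_vertex S ->
  exists f, nat_dom_coloring S (chi_dom e S) f.
Proof.
move=> S_ne S_nbr; apply: dom_colorable_nat_coloring.
exact: chi_dom_colorable (dom_colorable_card S_ne S_nbr).
Qed.

Lemma chi_dom_le_delete_vertex (S : {set T}) (v w : T) :
  w \in S -> e w v -> S :\ v != set0 ->
  no_isolated_vertex (S :\ v) ->
  chi_dom e S <= (chi_dom e (S :\ v)).+1.
Proof.
move=> wS ewv Sv_ne Sv_nbr; have [f f_col] := chi_dom_nat_coloring Sv_ne Sv_nbr.
exact/chi_dom_le/nat_coloring_dom_colorable/(nat_dom_coloring_add_vertex wS ewv f_col).
Qed.

Lemma chi_dom_delete_vertex_le (S : {set T}) (v w : T) :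
  v \in S -> w \in S -> e v w ->
  no_isolated_vertex S ->
  no_isolated_vertex (S :\ v) ->
  chi_dom e (S :\ v) <= chi_dom e S + deg e S v - 1.
Proof.
move=> vS wS evw S_nbr Sv_nbr.
have S_ne : S != set0 by apply/set0Pn; exists v.
have [f f_col] := chi_dom_nat_coloring S_ne S_nbr.
have f_pos : 0 < chi_dom e S by case: f_col => /(_ v vS); case: chi_dom.
have wN : w \in [set u in S | e v u] by rewrite inE wS.
rewrite /deg (cardsD1 w) wN add1n addnS subn1 /=.
apply/chi_dom_le/(nat_coloring_dom_colorable _ (nat_dom_coloring_delete_vertex wS evw Sv_nbr f_col)).
exact: ltn_addr.
Qed.

Lemma not_cut_vertex_connected (S : {set T}) (v : T) :
  v \in S -> ~ cut_vertex e S v -> connected_on e (S :\ v).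
Proof.
move=> vS not_cut x y xSv ySv; apply/idPn => not_conn.
by apply: not_cut; split=> // Sv_conn; rewrite Sv_conn in not_conn.
Qed.

End DominatedColoring.

Theorem theorem2p2 (T : finType) (e : rel T) (v : T) :
  simple_graph e ->
  connected_on e [set: T] ->
  3 <= #|T| ->
  ~ cut_vertex e [set: T] v ->
  chi_dom e [set: T] - 1 <= chi_dom e ([set: T] :\ v) /\
  chi_dom e ([set: T] :\ v) <= chi_dom e [set: T] + deg e [set: T] v - 1.
Proof.
move=> [e_sym e_irr] G_conn T_ge3 not_cut.
have card_Gv : #|[set: T] :\ v| = #|T|.-1.
  by rewrite -cardsT (cardsD1 v [set: T]) in_setT.
have Gv_conn := not_cut_vertex_connected (in_setT v) not_cut.
have G_gt1 : 1 < #|[set: T]| by rewrite cardsT; lia.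
have Gv_gt1 : 1 < #|[set: T] :\ v| by rewrite card_Gv; lia.
have G_nbr := connected_no_isolated_vertex e_sym G_conn G_gt1.
have Gv_nbr := connected_no_isolated_vertex e_sym Gv_conn Gv_gt1.
have [w _ ewv] := G_nbr v (in_setT v).
have Gv_ne : [set: T] :\ v != set0 by rewrite -card_gt0 card_Gv; lia.
split.
  by rewrite leq_subLR add1n (chi_dom_le_delete_vertex e_irr (in_setT w) ewv Gv_ne Gv_nbr).
have evw : e v w by rewrite e_sym.
exact: (chi_dom_delete_vertex_le e_irr (in_setT v) (in_setT w) evw G_nbr Gv_nbr).
Qed.
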